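(* Let $T$ be the set of $(a_0,\dots,a_9)\in\mathbb{R}^{10}$ such that $P(x,a)=x^{11}-x^{10}+a_9x^9+\cdots+a_0$ satisfies $a_9,a_8,a_7,a_6<0$, $a_5,\dots,a_1>0$, $a_0<0$ and has exactly one positive and exactly eight negative roots, all simple. Suppose $T\ne\emptyset$, let $\Gamma$ be a connected component of $T$, $\bar\Gamma$ its closure, and let $H$ be the set of polynomials $P(x,a)$, $a\in\bar\Gamma$, all of whose roots are real. Then $H$ contains no polynomial having one triple positive root and negative roots of total multiplicity $8$. *)

From HB Require Import structures.
From mathcomp Require Import all_boot all_order all_algebra.
From mathcomp Require Import all_classical all_reals all_analysis.
Set Implicit Arguments. Unset Strict Implicit. Unset Printing Implicit Defensive.
Import Order.TTheory GRing.Theory Num.Theory.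
Import numFieldNormedType.Exports.
Local Open Scope ring_scope.
Local Open Scope classical_set_scope.

Definition Pa (R : realType) (a : 'rV[R]_10) : {poly R} :=
  'X^11 - 'X^10 + \sum_(i < 10) a ord0 i *: 'X^i.

Definition sign_pattern (R : realType) (a : 'rV[R]_10) : Prop :=
  (forall i : 'I_10, (6 <= (i : nat))%N -> a ord0 i < 0) /\
  (forall i : 'I_10, (1 <= (i : nat) <= 5)%N -> 0 < a ord0 i) /\
  a ord0 (inord 0) < 0.

Definition root_pattern (R : realType) (p : {poly R}) : Prop :=
  (exists y : R, 0 < y /\ forall x : R, 0 < x -> (root p x <-> x = y)) /\
  (exists s : seq R, [/\ uniq s, size s = 8%N, all (fun x => x < 0) s &
      forall x : R, x < 0 -> (root p x <-> x \in s)]) /\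
  (forall x : R, root p x -> mup x p = 1%N).

Definition Tset (R : realType) : set 'rV[R]_10 :=
  [set a | sign_pattern a /\ root_pattern (Pa a)].

Definition all_roots_real (R : realType) (p : {poly R}) (rs : seq R) : Prop :=
  p = \prod_(r <- rs) ('X - r%:P).

Definition triple_pos_eight_neg (R : realType) (rs : seq R) : Prop :=
  (exists y : R, 0 < y /\ count (fun r => r == y) rs = 3%N) /\
  count (fun r => 0 < r) rs = 3%N /\
  count (fun r => r < 0) rs = 8%N.

From HB Require Import structures.
From mathcomp Require Import all_boot all_order all_algebra.
From mathcomp Require Import all_classical all_reals all_analysis.
From mathcomp Require Import ring lra zify.
Import Order.TTheory GRing.Theory Num.Theory.
Import numFieldNormedType.Exports.
Local Open Scope ring_scope.
Local Open Scope classical_set_scope.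

(* Suppose P = (x - y)^3 Q with y > 0 and Q the product over the eight
   negative roots, so that Q_0 > 0 and, by Newton's inequality,
   16 Q_0 Q_2 <= 7 Q_1^2.  Since y is a triple root and (6 - k)(11 - k) is
   quadratic in k, sum_k (6 - k)(11 - k) P_k y^k = 0.  On the closure of a
   component the coefficients P_1..P_5 are >= 0 and P_7..P_10 are <= 0, with
   P_10 = -1, so every term with k >= 3 is >= 0 and the k = 10 term is > 0.
   Hence 66 P_0 + 50 P_1 y + 36 P_2 y^2 < 0; written in terms of
   Q_0, Q_1, Q_2 this contradicts P_1, P_2 >= 0 and Newton's inequality. *)

Section WeightedHorner.
Variable R : comNzRingType.
Implicit Types (p : {poly R}) (f : nat -> R) (x : R).

Definition weighted_horner n f p x := \sum_(0 <= i < n) f i * p`_i * x ^+ i.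

Lemma coefXsubCM x p i :
  (('X - x%:P) * p)`_i = (if i == 0%N then 0 else p`_i.-1) - x * p`_i.
Proof. by rewrite mulrBl coefB coefXM coefCM. Qed.

Lemma weighted_horner_XsubCM n f p x : (size p <= n)%N ->
  weighted_horner n.+1 f (('X - x%:P) * p) x =
  x * weighted_horner n (fun i => f i.+1 - f i) p x.
Proof.
move=> /leq_sizeP pn0; rewrite /weighted_horner.
under eq_bigr do rewrite coefXsubCM mulrBr mulrBl.
rewrite sumrB big_nat_recl // big_nat_recr //= pn0 // !mulr0 !mul0r add0r addr0.
rewrite mulr_sumr -sumrB; apply: eq_bigr => i _; rewrite exprS; ring.
Qed.

(* Each factor X - x turns the weight into its forward difference, and the
   third difference of a quadratic weight vanishes. *)
Lemma weighted_horner_quadratic_cube_root n (l m : R) p x : (size p <= n)%N ->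
  weighted_horner n.+3 (fun i => (l - i%:R) * (m - i%:R))
    (('X - x%:P) ^+ 3 * p) x = 0.
Proof.
move=> size_p.
have size_XsubCM (q : {poly R}) k :
    (size q <= k)%N -> (size (('X - x%:P) * q)%R <= k.+1)%N.
  by move=> ?; apply: leq_trans (size_polyMleq _ _) _; rewrite size_XsubC.
rewrite !exprS expr0 mulr1 -!mulrA !weighted_horner_XsubCM ?size_XsubCM //.
rewrite /weighted_horner big1 ?mulr0 // => i _.
by rewrite !mulrSr [X in X * _ * _](_ : _ = 0) ?mul0r //; ring.
Qed.

End WeightedHorner.

Lemma newton_prod_XsubC (R : realFieldType) (s : seq R) :
  let p := \prod_(r <- s) ('X - r%:P) in
  0 <= p`_1 ^+ 2 - 2 * p`_0 * p`_2 /\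
  p`_1 ^+ 2 <= (size s)%:R * (p`_1 ^+ 2 - 2 * p`_0 * p`_2).
Proof.
elim: s => [|x s IH] /=; first by rewrite big_nil !coef1 /=; lra.
move: IH; rewrite big_cons !coefXsubCM /=.
set A := _`_0; set B := _`_1; set C := _`_2; set n : R := (size s)%:R.
move=> [gap_ge0 newton].
have -> : (size s).+1%:R = n + 1 by rewrite /n natr1.
have -> : (A - x * B) ^+ 2 - 2 * (0 - x * A) * (B - x * C) =
          A ^+ 2 + x ^+ 2 * (B ^+ 2 - 2 * A * C) by ring.
split; first by rewrite addr_ge0 ?sqr_ge0 // mulr_ge0 ?sqr_ge0.
have [n0|n_neq0] := eqVneq n 0.
  have B0 : B = 0.
    by apply/eqP; rewrite -sqrf_eq0 eq_le sqr_ge0 andbT; move: newton; rewrite n0 mul0r.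
  move: gap_ge0; rewrite n0 B0 mulr0 subr0 add0r mul1r lerDl.
  exact: mulr_ge0 (sqr_ge0 x).
have n_gt0 : 0 < n by rewrite lt_def n_neq0 ler0n.
rewrite -subr_ge0 -(pmulr_rge0 _ n_gt0).
have -> : n * ((n + 1) * (A ^+ 2 + x ^+ 2 * (B ^+ 2 - 2 * A * C)) - (A - x * B) ^+ 2)
    = (n * A + x * B) ^+ 2 + (n + 1) * x ^+ 2 * (n * (B ^+ 2 - 2 * A * C) - B ^+ 2).
  by ring.
rewrite addr_ge0 ?sqr_ge0 // mulr_ge0 ?subr_ge0 // mulr_ge0 ?sqr_ge0 //.
by rewrite addr_ge0 ?ler01 ?ltW.
Qed.

(* Otherwise, with u = q1 / q0, 58 u - 24 < 36 q2 / q0 <= min (108 u - 108) (63 u^2 / 4);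
   the first bound forces u > 1.68, and then the second forces u > 3.2 > 3. *)
Lemma newton_low_coef_ineq (R : realFieldType) (q0 q1 q2 : R) :
  0 < q0 -> q1 <= 3 * q0 -> 3 * q0 + q2 <= 3 * q1 ->
  16 * q0 * q2 <= 7 * q1 ^+ 2 -> 24 * q0 + 36 * q2 <= 58 * q1.
Proof. by move=> *; nra. Qed.

Section TripleRootObstruction.
Variables (R : realFieldType) (y : R) (q : {poly R}).
Hypotheses (y_gt0 : 0 < y) (size_q : (size q <= 9)%N).
Let p := ('X - y%:P) ^+ 3 * q.
Hypotheses (p_ge0 : forall k, (1 <= k <= 5)%N -> 0 <= p`_k)
           (p_le0 : forall k, (7 <= k <= 10)%N -> p`_k <= 0)
           (p10_lt0 : p`_10 < 0).

Let f k : R := (6 - k%:R) * (11 - k%:R).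

Lemma weighted_term_ge0 k : (3 <= k <= 11)%N -> 0 <= f k * p`_k.
Proof.
move=> /andP[k_ge3 k_le11]; rewrite /f.
have [k_le5|k_gt5] := leqP k 5.
  by rewrite !mulr_ge0 ?p_ge0 ?subr_ge0 ?ler_nat //; lia.
have [k_le10|k_gt10] := leqP k 10; last first.
  have -> : k = 11%N by lia.
  by rewrite subrr mulr0 mul0r.
have [->|k_neq6] := eqVneq k 6%N; first by rewrite subrr !mul0r.
rewrite mulr_le0 ?p_le0 ?nmulr_rle0 ?subr_ge0 ?subr_lt0 ?ler_nat ?ltr_nat //; lia.
Qed.

Lemma triple_root_low_coef_lt0 :
  66 * p`_0 + 50 * p`_1 * y + 36 * p`_2 * y ^+ 2 < 0.
Proof.
have partial_ge0 m n : (3 <= m)%N -> (n <= 12)%N ->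
    0 <= \sum_(m <= i < n) f i * p`_i * y ^+ i.
  move=> m_ge3 n_le12; rewrite big_nat_cond; apply: sumr_ge0 => i.
  move=> /andP[/andP[m_le_i i_lt_n] _].
  apply: mulr_ge0; last exact/exprn_ge0/ltW.
  by apply: weighted_term_ge0; lia.
have term10_gt0 : 0 < f 10 * p`_10 * y ^+ 10.
  have -> : f 10 = -4 by rewrite /f; ring.
  by rewrite mulr_gt0 ?exprn_gt0 // nmulr_rgt0 // oppr_lt0.
have : \sum_(0 <= i < 12) f i * p`_i * y ^+ i = 0.
  exact: weighted_horner_quadratic_cube_root.
rewrite (big_cat_nat (n := 3)) // (big_cat_nat (m := 3) (n := 10)) //.
rewrite (big_ltn (m := 10)) // 3?big_ltn // big_geq //=.
move: term10_gt0 (partial_ge0 3%N 10%N isT isT) (partial_ge0 11%N 12%N isT isT).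
rewrite /f /=; lra.
Qed.

Lemma triple_root_newton_contra :
  0 < q`_0 -> 16 * q`_0 * q`_2 <= 7 * q`_1 ^+ 2 -> False.
Proof.
move=> q0_gt0 newton.
have [p0E p1E p2E] : [/\ p`_0 = - y ^+ 3 * q`_0,
    p`_1 = y ^+ 2 * (3 * q`_0 - y * q`_1) &
    p`_2 = y * (3 * (y * q`_1) - 3 * q`_0 - y ^+ 2 * q`_2)].
  by rewrite /p !exprS expr0 mulr1 -!mulrA !coefXsubCM /=; split; ring.
have := p_ge0 1%N isT; rewrite p1E pmulr_rge0 ?exprn_gt0 // subr_ge0 => p1_ge0.
have := p_ge0 2%N isT; rewrite p2E pmulr_rge0 // subr_ge0 => p2_ge0.
have := triple_root_low_coef_lt0; rewrite p0E p1E p2E.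
have -> : 66 * (- y ^+ 3 * q`_0) + 50 * (y ^+ 2 * (3 * q`_0 - y * q`_1)) * y +
    36 * (y * (3 * (y * q`_1) - 3 * q`_0 - y ^+ 2 * q`_2)) * y ^+ 2 =
    y ^+ 3 * (58 * (y * q`_1) - (24 * q`_0 + 36 * (y ^+ 2 * q`_2))) by ring.
rewrite pmulr_rlt0 ?exprn_gt0 // subr_lt0 ltNge newton_low_coef_ineq //; first lra.
by move: newton; rewrite -(ler_pM2l (exprn_gt0 2 y_gt0)); lra.
Qed.

End TripleRootObstruction.

Lemma count_sub_eq {T : eqType} {P Q : pred T} {s : seq T} :
  subpred P Q -> count P s = count Q s -> {in s, subpred Q P}.
Proof.
move=> PQ eq_PQ z z_in Qz.
have : count (predC P) [seq x <- s | Q x] == 0%N.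
  have := count_predC P [seq x <- s | Q x]; rewrite size_filter -eq_PQ count_filter.
  by rewrite (eq_count (a2 := P)) => [|x /=]; [lia | rewrite andb_idr //; apply: PQ].
rewrite eqn0Ngt -has_count => /hasPn/(_ z); rewrite mem_filter Qz z_in negbK; exact.
Qed.

Lemma prod_XsubC_split_const {R : comNzRingType} {P : pred R} {y : R} {rs : seq R} :
  {in rs, forall r, ~~ P r -> r = y} ->
  \prod_(r <- rs) ('X - r%:P) =
  ('X - y%:P) ^+ count (predC P) rs * \prod_(r <- rs | P r) ('X - r%:P).
Proof.
move=> outside_y; rewrite (bigID P) /= mulrC; congr (_ * _).
rewrite big_seq_cond (eq_bigr (fun=> 'X - y%:P)) => [|r /andP[r_in nPr]].
  by rewrite big_const_seq iter_mulr_1 (eq_in_count (a2 := predC P)) // => r ->.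
by rewrite (outside_y r r_in nPr).
Qed.

Lemma prod_XsubC_coef0_gt0 (R : realDomainType) (s : seq R) :
  all (fun r => r < 0) s -> 0 < (\prod_(r <- s) ('X - r%:P))`_0.
Proof.
move=> /allP s_neg; rewrite -horner_coef0 horner_prod big_seq.
by apply: prodr_gt0 => r r_in; rewrite hornerXsubC sub0r oppr_gt0 s_neg.
Qed.

Section CoefficientVectors.
Variable R : realType.
Implicit Types a : 'rV[R]_10.

Lemma coef_Pa a k : (Pa a)`_k =
  (k == 11)%:R - (k == 10)%:R + (if (k < 10)%N then a ord0 (inord k) else 0).
Proof.
rewrite /Pa (eq_bigr (fun i : 'I_10 => a ord0 (inord i) *: 'X^i)); last first.
  by move=> i _; rewrite inord_val.
by rewrite -(poly_def 10 (fun i => a ord0 (inord i))) coefD coefB !coefXn coef_poly.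
Qed.

Lemma size_Pa a : size (Pa a) = 12%N.
Proof.
apply/anti_leq/andP; split.
  apply/leq_sizeP => j j_ge12; rewrite coef_Pa.
  have [-> -> ->] : [/\ j == 11 = false, j == 10 = false & (j < 10) = false]%N.
    by split; apply/negbTE; lia.
  by rewrite subrr add0r.
rewrite ltnNge; apply/negP => /leq_sizeP/(_ 11%N (leqnn _)).
by rewrite coef_Pa /= subr0 addr0; apply/eqP; rewrite oner_eq0.
Qed.

Definition weak_sign_pattern a : Prop :=
  (forall i : 'I_10, (6 <= i)%N -> a ord0 i <= 0) /\
  (forall i : 'I_10, (1 <= i <= 5)%N -> 0 <= a ord0 i).

Lemma closure_coord {m n} {A : set 'M[R]_(m, n)} {C : set R} i j :
  closed C -> (forall M, A M -> C (M i j)) -> forall M, closure A M -> C (M i j).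
Proof.
move=> closedC A_C; rewrite closureE; apply: smallest_sub A_C.
exact: (proj1 (continuous_closedP _) (@coord_continuous R _ _ i j)).
Qed.

Lemma closure_Tset_weak_sign_pattern a : closure (@Tset R) a -> weak_sign_pattern a.
Proof.
move=> cl_a; split=> i i_range.
  apply: (closure_coord ord0 i (@closed_le R 0) _ _ cl_a) => b [[neg _] _].
  exact/ltW/neg.
apply: (closure_coord ord0 i (@closed_ge R 0) _ _ cl_a) => b [[_ [pos _]] _].
exact/ltW/pos.
Qed.

Lemma weak_sign_pattern_coef_Pa a : weak_sign_pattern a ->
  (forall k, (1 <= k <= 5)%N -> 0 <= (Pa a)`_k) /\
  (forall k, (6 <= k <= 10)%N -> (Pa a)`_k <= 0).
Proof.
move=> [neg pos]; split=> k k_range; rewrite coef_Pa.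
  have [/negbTE -> /negbTE -> ->] : [/\ k != 11, k != 10 & k < 10]%N by split; lia.
  by rewrite subrr add0r; apply: pos; rewrite inordK //; lia.
have /negbTE -> : k != 11%N by lia.
have [->|k_neq10] := eqVneq k 10%N; first by rewrite /= sub0r addr0 lerN10.
rewrite ifT; last by lia.
by rewrite subrr add0r; apply: neg; rewrite inordK //; lia.
Qed.

End CoefficientVectors.

Theorem lemma10 (R : realType) (a0 : 'rV[R]_10) (Ha0 : @Tset R a0)
  (a : 'rV[R]_10) (Ha : closure (connected_component (@Tset R) a0) a)
  (rs : seq R) (Hreal : all_roots_real (Pa a) rs) :
  ~ triple_pos_eight_neg rs.
Proof.
move=> [[y [y_gt0 count_y]] [_ count_neg]].
have [pos_coef neg_coef] := weak_sign_pattern_coef_Pa _ _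
  (closure_Tset_weak_sign_pattern _ _ (closureS (@connected_component_sub _ _ a0) Ha)).
have size_rs : size rs = 11%N.
  by have := congr1 (fun p : {poly R} => size p) Hreal; rewrite size_Pa size_prod_XsubC => -[].
have count_nonneg : count (predC (fun r => r < 0)) rs = 3%N.
  by have := count_predC (fun r => r < 0) rs; rewrite count_neg size_rs; lia.
have nonneg_y : {in rs, forall r, ~~ (r < 0) -> r = y}.
  have y_nonneg : subpred (fun r => r == y) (predC (fun r => r < 0)).
    by move=> r /eqP ->; rewrite /= -leNgt ltW.
  have := count_sub_eq (s := rs) y_nonneg; rewrite count_y count_nonneg => /(_ erefl) y_only.
  by move=> r r_in r_nonneg; apply/eqP/y_only.
set s := [seq r <- rs | r < 0].
have Pa_factor : Pa a = ('X - y%:P) ^+ 3 * \prod_(r <- s) ('X - r%:P).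
  by rewrite Hreal (prod_XsubC_split_const nonneg_y) count_nonneg big_filter.
have size_s : size s = 8%N by rewrite size_filter.
apply: (triple_root_newton_contra _ y (\prod_(r <- s) ('X - r%:P)) y_gt0).
- by rewrite size_prod_XsubC size_s.
- by move=> k k_range; rewrite -Pa_factor; apply: pos_coef.
- by move=> k k_range; rewrite -Pa_factor; apply: neg_coef; lia.
- by rewrite -Pa_factor coef_Pa /= sub0r addr0 ltrN10.
- exact/prod_XsubC_coef0_gt0/filter_all.
- by have [_] := newton_prod_XsubC _ s; rewrite size_s; lra.
Qed.
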